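(* Let $n_1,\dots,n_m$ be positive integers, $n=n_1+\cdots+n_m$, let $\tau$ be a smooth $k$-representation of $M'=M'_{n_1,\dots,n_m}$, let $\rho$ be a subquotient of $\tau$, and let $\theta$ be a non-degenerate character of $U=U_{n_1}\times\cdots\times U_{n_m}$. If $\rho^{(n)}_\theta\neq0$, then $\tau^{(n)}_\theta\neq0$.
   Context: $F$ is a non-archimedean locally compact field of residual characteristic $p$, $k$ an algebraically closed field of characteristic $\ell\neq p$. $M_{n_1,\dots,n_m}=\mathrm{GL}_{n_1}(F)\times\cdots\times\mathrm{GL}_{n_m}(F)$ embedded block-diagonally in $\mathrm{GL}_n(F)$, and $M'_{n_1,\dots,n_m}=M_{n_1,\dots,n_m}\cap\mathrm{SL}_n(F)$. $U_{n_i}$ is the upper unitriangular subgroup of $\mathrm{GL}_{n_i}(F)$; $\theta:U\to k^\times$ is a smooth character trivial on $[U,U]$ and nontrivial on each simple root subgroup. Derivative: for $1\le s\le m$ and $2\le j\le n_s$ let $N_{s,j}\subset U$ be the subgroup of elements equal to the identity in all blocks except block $s$, where the entry is an upper unitriangular matrix whose only possibly nonzero off-diagonal entries lie in column $j$, rows $1,\dots,j-1$. List these as $N_{m,n_m},\dots,N_{m,2},N_{m-1,n_{m-1}},\dots,N_{1,2}$. For a representation on a space $E$, put $E_0=E$ and let $E_t$ be the quotient of $E_{t-1}$ by the span of $ga-\theta(g)a$, $g$ in the $t$-th group of the list, $a\in E_{t-1}$. The final quotient is the $n$-th derivative, denoted $(\cdot)^{(n)}_\theta$ (written $(\cdot)^{(n_1+\cdots+n_m)}_{\theta,m}$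 in the paper). *)

From HB Require Import structures.
From mathcomp Require Import all_boot all_order all_algebra.
From mathcomp Require Import reals.
Set Implicit Arguments. Unset Strict Implicit. Unset Printing Implicit Defensive.
Import Order.TTheory GRing.Theory Num.Theory.
Local Open Scope ring_scope.

(* [v] is an absolute value on F; F is a non-archimedean, non-discrete-trivial,
   locally compact valued field (local compactness <-> the closed unit ball
   O = {v x <= 1} is (sequentially) compact for the metric v(x-y)), whose
   residue field O/{v x < 1} has characteristic p (i.e. v p < 1, p prime). *)
Definition nonarch_local_field (R : realType) (F : fieldType) (v : F -> R)
    (p : nat) : Prop :=
  [/\ v 0 = 0,
      (forall x, x != 0 -> 0 < v x),
      (forall x y, v (x * y) = v x * v y),
      (forall x y, v (x + y) <= Num.max (v x) (v y)) /\
      (exists x, 0 < v x < 1) /\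
      (forall u : nat -> F, (forall t, v (u t) <= 1) ->
         exists (phi : nat -> nat) (x : F),
           (forall t, (phi t < phi t.+1)%N) /\ v x <= 1 /\
           (forall eps : R, 0 < eps -> exists K, forall t, (K <= t)%N ->
              v (u (phi t) - x) < eps))
    & prime p /\ v (p%:R) < 1].

(* blocks are indexed 0 .. m-1 (paper: 1 .. m); off s = n_1 + ... + n_s *)
Definition off (ns : seq nat) (s : nat) : nat := sumn (take s ns).
(* index of the block containing the (0-indexed) row/column i *)
Definition blk (ns : seq nat) (i : nat) : nat :=
  size [seq s <- iota 0 (size ns) | (off ns s.+1 <= i)%N].

Section Groups.
Variables (F : fieldType) (ns : seq nat).
Local Notation n := (sumn ns).

Definition blockdiag (g : 'M[F]_n) : Prop :=
  forall i j : 'I_n, blk ns i != blk ns j -> g i j = 0.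

Definition Mprime (g : 'M[F]_n) : Prop := blockdiag g /\ \det g = 1.

Definition Ugrp (g : 'M[F]_n) : Prop :=
  blockdiag g /\ (forall i : 'I_n, g i i = 1) /\
  (forall i j : 'I_n, (j < i)%N -> g i j = 0).

(* N_{s,c}: block s (0-indexed), local column c (0-indexed, paper: j = c+1) *)
Definition Ngrp (s c : nat) (g : 'M[F]_n) : Prop :=
  (forall i : 'I_n, g i i = 1) /\
  (forall i j : 'I_n, i != j -> g i j != 0 ->
     [/\ val j = (off ns s + c)%N, (off ns s <= i)%N & (i < j)%N]).

(* the ordered list N_{m,n_m}, ..., N_{m,2}, N_{m-1,n_{m-1}}, ..., N_{1,2} *)
Definition Nlist : seq (nat * nat) :=
  flatten [seq [seq (s, c) | c <- rev (iota 1 (nth 0%N ns s).-1)]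
          | s <- rev (iota 0 (size ns))].

Definition root_elt (a : nat) (x : F) : 'M[F]_n :=
  \matrix_(i, j) ((i == j :> nat)%:R + (if ((i == a :> nat) && (j == a.+1 :> nat))
                                       then x else 0)).
End Groups.

Definition near1 (R : realType) (F : fieldType) (v : F -> R) (m : nat)
    (eps : R) (g : 'M[F]_m) : Prop :=
  forall i j : 'I_m, v (g i j - (i == j)%:R) < eps.

Definition smooth_rep (R : realType) (F : fieldType) (v : F -> R) (m : nat)
    (k : fieldType) (E : lmodType k) (G : 'M[F]_m -> Prop)
    (pi : 'M[F]_m -> E -> E) : Prop :=
  [/\ (forall g a (x y : E), pi g (a *: x + y) = a *: pi g x + pi g y),
      (forall x, pi 1%:M x = x),
      (forall g h x, G g -> G h -> pi (g *m h) x = pi g (pi h x))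
    & (forall x, exists2 eps : R, 0 < eps &
         forall g, G g -> near1 v eps g -> pi g x = x)].

(* rho is (isomorphic to) a subquotient W/W' of tau: W a subrepresentation
   and f : W ->> E2 a surjective equivariant linear map (W' = ker f). *)
Definition subquotient (F : fieldType) (m : nat) (k : fieldType)
    (E1 E2 : lmodType k) (G : 'M[F]_m -> Prop)
    (tau : 'M[F]_m -> E1 -> E1) (rho : 'M[F]_m -> E2 -> E2) : Prop :=
  exists (W : E1 -> Prop) (f : E1 -> E2),
    [/\ W 0, (forall a x y, W x -> W y -> W (a *: x + y)),
        (forall g x, G g -> W x -> W (tau g x)),
        (forall a x y, f (a *: x + y) = a *: f x + f y) /\
        (forall g x, G g -> W x -> f (tau g x) = rho g (f x))
      & (forall y, exists2 x, W x & f x = y)].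

Definition nondeg_char (R : realType) (F : fieldType) (v : F -> R)
    (ns : seq nat) (k : fieldType) (theta : 'M[F]_(sumn ns) -> k) : Prop :=
  [/\ (forall g, Ugrp g -> theta g != 0),
      (forall g h, Ugrp g -> Ugrp h -> theta (g *m h) = theta g * theta h),
      (forall g h, Ugrp g -> Ugrp h -> g \in unitmx -> h \in unitmx ->
         theta (g *m h *m invmx g *m invmx h) = 1) /\
      (exists2 eps : R, 0 < eps &
         forall g, Ugrp g -> near1 v eps g -> theta g = 1)
    & (forall s c, (s < size ns)%N -> (1 <= c < nth 0%N ns s)%N ->
         exists x, theta (@root_elt F ns (off ns s + c).-1 x) != 1)].

Inductive gen_span (k : fieldType) (E : lmodType k) (P : E -> Prop) : E -> Prop :=
| gs_zero : gen_span P 0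
| gs_base x : P x -> gen_span P x
| gs_lin a x y : gen_span P x -> gen_span P y -> gen_span P (a *: x + y).

(* Iterated quotient: E_t = E / S_t where S_0 = 0 and S_t is the preimage in E
   of span{g a - theta(g) a : g in N_t, a in E_{t-1}}, i.e.
   S_t = span(S_{t-1} u {pi g a - theta g a : g in N_t, a in E}). *)
Definition deriv_step (F : fieldType) (ns : seq nat) (k : fieldType)
    (E : lmodType k) (pi : 'M[F]_(sumn ns) -> E -> E)
    (theta : 'M[F]_(sumn ns) -> k) (S : E -> Prop) (sc : nat * nat) : E -> Prop :=
  gen_span (fun x => S x \/ exists g a, @Ngrp F ns sc.1 sc.2 g /\
                                       x = pi g a - theta g *: a).

Definition deriv_kernel (F : fieldType) (ns : seq nat) (k : fieldType)
    (E : lmodType k) (pi : 'M[F]_(sumn ns) -> E -> E)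
    (theta : 'M[F]_(sumn ns) -> k) : E -> Prop :=
  foldl (deriv_step pi theta) (fun x => x = 0) (Nlist ns).

(* the n-th derivative E / deriv_kernel is nonzero *)
Definition derivative_nonzero (F : fieldType) (ns : seq nat) (k : fieldType)
    (E : lmodType k) (pi : 'M[F]_(sumn ns) -> E -> E)
    (theta : 'M[F]_(sumn ns) -> k) : Prop :=
  exists x : E, ~ deriv_kernel pi theta x.

From HB Require Import structures.
From mathcomp Require Import all_boot all_order all_algebra.
From mathcomp Require Import reals.
From mathcomp Require Import zify lra.
Set Implicit Arguments. Unset Strict Implicit. Unset Printing Implicit Defensive.
Import Order.TTheory GRing.Theory Num.Theory.
Local Open Scope ring_scope.

(* Each N_{s,c} consists of the matrices 1 + A with A supported in a single column above
   the diagonal, so A^2 = 0 and (1 + A)^j = 1 + jA.  Since v p < 1, (1 + A)^(p^N) tends to 1: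
   by smoothness it fixes any given vector and lies in the kernel of theta for large N, and
   as p is invertible in k the theta-twisted average of tau((1 + A)^j) over j < p^N is
   defined.  This average kills tau(1 + A) b - theta(1 + A) b, commutes with N_{s,c},
   preserves W and the kernels of the earlier steps (N_{s,c} normalises the earlier groups,
   preserving theta), and moves a vector only by an element of the current kernel.
   Averaging the generators away one at a time shows that f maps the vectors of W in the
   derivative kernel of tau into that of rho, so a preimage in W of a vector outside the
   kernel of rho lies outside the kernel of tau. *)

Section LinearClosure.
Variables (k : fieldType) (E : lmodType k).
Implicit Types (S P : E -> Prop).

Definition lin_closed S := S 0 /\ forall a x y, S x -> S y -> S (a *: x + y).

Lemma lin_closedZ S a x : lin_closed S -> S x -> S (a *: x).
Proof. by case=> S0 SP Sx; rewrite -[_ *: x]addr0; apply: SP. Qed.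

Lemma lin_closedD S x y : lin_closed S -> S x -> S y -> S (x + y).
Proof. by case=> _ SP Sx Sy; rewrite -[x]scale1r; apply: SP. Qed.

Lemma lin_closed_sum S I (r : seq I) (F : I -> E) :
  lin_closed S -> (forall i, S (F i)) -> S (\sum_(i <- r) F i).
Proof.
move=> hS SF; elim: r => [|i r IH]; first by rewrite big_nil; case: hS.
by rewrite big_cons; apply: lin_closedD.
Qed.

Lemma gen_span_lin_closed P : lin_closed (gen_span P).
Proof. by split=> [|a x y]; [apply: gs_zero | apply: gs_lin]. Qed.

Lemma gen_span_stable P (T : {linear E -> E}) :
  (forall x, P x -> gen_span P (T x)) -> forall x, gen_span P x -> gen_span P (T x).
Proof.
move=> TP x; elim=> [|y /TP //|a y z _ Ty _ Tz]; first by rewrite linear0; apply: gs_zero.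
by rewrite linearP; apply: gs_lin.
Qed.

End LinearClosure.

Section TwistSums.
Variables (k : fieldType) (E : lmodType k) (T : Type) (N : T -> Prop)
  (pi : T -> E -> E) (theta : T -> k).
Hypothesis pi_linear : forall g, linear (pi g).
HB.instance Definition _ g := GRing.isLinear.Build k E E *:%R (pi g) (pi_linear g).

Fixpoint twist_sum (r : nat) (y : E) : Prop :=
  if r is r'.+1 then
    exists g b z, [/\ N g, twist_sum r' z & y = z + (pi g b - theta g *: b)]
  else y = 0.

Lemma twist_sumZ r a y : twist_sum r y -> twist_sum r (a *: y).
Proof.
elim: r y => [|r IH] y /=; first by move->; rewrite scaler0.
case=> g [b [z [Ng hz ->]]]; exists g, (a *: b), (a *: z); split; [by [] | exact: IH |].
by rewrite [pi g (a *: b)]linearZ !scalerDr scalerN !scalerA [theta g * a]mulrC.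
Qed.

Lemma twist_sumD r r' y y' : twist_sum r y -> twist_sum r' y' -> twist_sum (r + r') (y + y').
Proof.
move=> hy; elim: r' y' => [|r' IH] y' /=; first by move->; rewrite addn0 addr0.
case=> g [b [z [Ng hz ->]]]; rewrite addnS; exists g, b, (y + z).
by split; [by [] | exact: IH | rewrite addrA].
Qed.

Lemma gen_span_twist_sum (S : E -> Prop) x : lin_closed S ->
  gen_span (fun x => S x \/ exists g b, N g /\ x = pi g b - theta g *: b) x ->
  exists2 s0, S s0 & exists r, twist_sum r (x - s0).
Proof.
move=> [S0 SP]; elim=> [|y [Sy|[g [b [Ng ->]]]]|a y z _ [sy Sy [ry hy]] _ [sz Sz [rz hz]]].
- by exists 0 => //; exists 0%N; rewrite subrr.
- by exists y => //; exists 0%N; rewrite subrr.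
- by exists 0 => //; exists 1%N, g, b, 0; split=> //; rewrite subr0 add0r.
exists (a *: sy + sz); first exact: SP.
exists (ry + rz)%N; rewrite opprD addrACA -scalerBr.
by apply: twist_sumD => //; apply: twist_sumZ.
Qed.

End TwistSums.

Section SmallPowers.
Variable R : archiRealFieldType.

Lemma bernoulli_ineq (h : R) N : 0 <= h -> 1 + N%:R * h <= (1 + h) ^+ N.
Proof.
move=> h0; elim: N => [|N IH]; first by rewrite expr0 mul0r addr0.
rewrite exprS -natr1; have N0 : 0 <= (N%:R : R) by rewrite ler0n.
nra.
Qed.

Lemma exists_expr_small (q B eps : R) : 0 <= q -> q < 1 -> 0 < eps ->
  exists N, q ^+ N * B < eps.
Proof.
move=> q0 q1 eps0; have [->|qn0] := eqVneq q 0.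
  by exists 1%N; rewrite expr1 mul0r.
have q_gt0 : 0 < q by rewrite lt_def qn0 q0.
pose h := q^-1 - 1.
have h_gt0 : 0 < h by rewrite /h subr_gt0 invf_gt1.
pose N := Num.bound (`|B| / (h * eps)).
have ltN : `|B| / (h * eps) < N%:R.
  by apply: archi_boundP; rewrite divr_ge0 // mulr_ge0 // ltW.
have inv_q : 1 + h = q^-1 by rewrite /h addrC subrK.
exists N; have := bernoulli_ineq N (ltW h_gt0); rewrite inv_q exprVn => bern.
have qN_gt0 : 0 < q ^+ N by rewrite exprn_gt0.
have B_le : B <= `|B| := ler_norm B.
rewrite mulrC -[q ^+ N]invrK ltr_pdivrMr ?invr_gt0 //.
rewrite ltr_pdivrMr ?mulr_gt0 // in ltN.
have N0 : 0 <= (N%:R : R) by rewrite ler0n.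
nra.
Qed.

End SmallPowers.

Section ColumnSupport.
Variables (F : nzRingType) (n : nat).
Implicit Types (A B : 'M[F]_n).

Definition col_supp (a J : nat) A :=
  forall i j : 'I_n, A i j != 0 -> [/\ val j = J, (a <= i)%N & (i < j)%N].

(* (1 + A)^j for column-supported A, see unipowS. *)
Definition unipow A (j : nat) : 'M[F]_n := 1%:M + j%:R *: A.

Lemma col_supp0 a J : col_supp a J 0.
Proof. by move=> i j; rewrite mxE eqxx. Qed.

Lemma col_suppD a J A B : col_supp a J A -> col_supp a J B -> col_supp a J (A + B).
Proof.
move=> hA hB i j; rewrite mxE; have [->|/hA //] := eqVneq (A i j) 0.
by rewrite add0r => /hB.
Qed.

Lemma col_suppZ a J x A : col_supp a J A -> col_supp a J (x *: A).
Proof.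
by move=> hA i j; rewrite mxE => nz; apply: hA; apply: contraNneq nz => ->; rewrite mulr0.
Qed.

Lemma col_supp_lower a J A (i j : 'I_n) : col_supp a J A -> (j <= i)%N -> A i j = 0.
Proof. by move=> hA ji; apply/eqP; apply: contraTT ji => /hA[_ _]; rewrite -ltnNge. Qed.

Lemma mulmx_neq0 A B i j : (A *m B) i j != 0 -> exists l, A i l != 0 /\ B l j != 0.
Proof.
rewrite mxE => nz; have /existsP[l /andP[? ?]] : [exists l, (A i l != 0) && (B l j != 0)].
  apply: contraNT nz => /existsPn H; apply/eqP; rewrite big1 // => l _.
  by have := H l; rewrite negb_and !negbK => /orP[]/eqP->; rewrite ?mul0r ?mulr0.
by exists l.
Qed.

Lemma col_supp_mul0 a J b K A B : col_supp a J A -> col_supp b K B ->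
  ~~ ((b <= J) && (J < K))%N -> A *m B = 0.
Proof.
move=> hA hB hJ; apply/matrixP => i j; rewrite [RHS]mxE; apply/eqP.
apply: contraNT hJ => /mulmx_neq0[l [/hA[<- _ _] /hB[<- bl lj]]].
by rewrite bl lj.
Qed.

Lemma col_supp_mul a J b K A B : col_supp a J A -> col_supp b K B ->
  (b <= a)%N -> col_supp b K (A *m B).
Proof.
move=> hA hB ba i j /mulmx_neq0[l [/hA[_ ai il] /hB[jK _ lj]]].
by split=> //; [apply: leq_trans ai | apply: ltn_trans lj].
Qed.

Lemma mul1D_col_supp a b J A B : col_supp a J A -> col_supp b J B ->
  (1%:M + A) *m (1%:M + B) = 1%:M + (A + B).
Proof.
move=> hA hB; rewrite mulmxDl !mulmxDr !mul1mx mulmx1.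
by rewrite (col_supp_mul0 hA hB) ?ltnn ?andbF // addr0 -addrA [B + A]addrC.
Qed.

Lemma unipow0 A : unipow A 0 = 1%:M.
Proof. by rewrite /unipow scale0r addr0. Qed.

Lemma unipowS a J A j : col_supp a J A -> unipow A j *m (1%:M + A) = unipow A j.+1.
Proof.
by move=> hA; rewrite /unipow (mul1D_col_supp (col_suppZ hA) hA) -natr1 scalerDl scale1r.
Qed.

Lemma unipow_comm a b J A B j : col_supp a J A -> col_supp b J B ->
  unipow A j *m (1%:M + B) = (1%:M + B) *m unipow A j.
Proof.
move=> hA hB; have hjA := col_suppZ (x := j%:R) hA; rewrite /unipow.
by rewrite (mul1D_col_supp hjA hB) (mul1D_col_supp hB hjA) [B + _]addrC.
Qed.

Lemma col_supp_conj a J b K A B : col_supp a J A -> col_supp b K B ->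
  (J < K)%N -> (J < b)%N || (b <= a)%N ->
  exists2 C, col_supp b K C & (1%:M + C) *m (1%:M + A) = (1%:M + A) *m (1%:M + B).
Proof.
move=> hA hB JK hb; exists (B + A *m B).
  case/orP: hb => [Jb|ba]; last by apply: col_suppD => //; apply: col_supp_mul hA hB ba.
  by rewrite (col_supp_mul0 hA hB) ?addr0 // negb_and -ltnNge Jb.
have BA : B *m A = 0 by apply: col_supp_mul0 hB hA _; rewrite ltnNge (ltnW JK) andbF.
rewrite !mulmxDl !mulmxDr !mul1mx !mulmx1 BA -mulmxA BA mulmx0 !addr0.
rewrite -!addrA; congr (_ + _); rewrite !addrA; congr (_ + _); exact: addrC.
Qed.

End ColumnSupport.

Section AbsoluteValue.
Variables (R : realType) (F : fieldType) (v : F -> R).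
Hypotheses (v0 : v 0 = 0) (v_gt0 : forall x, x != 0 -> 0 < v x)
  (vM : forall x y, v (x * y) = v x * v y).

Lemma v_ge0 x : 0 <= v x.
Proof. by have [->|/v_gt0/ltW] := eqVneq x 0; rewrite ?v0. Qed.

Lemma v1 : v 1 = 1.
Proof.
have v11 : v 1 * v 1 = v 1 * 1 by rewrite -vM !mulr1.
by apply: mulfI v11; rewrite gt_eqF // v_gt0 ?oner_neq0.
Qed.

Lemma vX x N : v (x ^+ N) = v x ^+ N.
Proof. by elim: N => [|N IH]; rewrite ?expr0 ?v1 // !exprS vM IH. Qed.

Lemma near1_unipow_pexp n p (A : 'M[F]_n) eps : v p%:R < 1 -> 0 < eps ->
  exists N, near1 v eps (unipow A (p ^ N)).
Proof.
move=> vp1 eps0; pose B := \sum_i \sum_j v (A i j).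
have [N ltN] := exists_expr_small B (v_ge0 p%:R) vp1 eps0.
exists N => i j; rewrite /unipow !mxE addrAC subrr add0r vM natrX vX.
apply: le_lt_trans ltN; rewrite ler_wpM2l ?exprn_ge0 ?v_ge0 //.
rewrite /B (bigD1 i) //= (bigD1 j) //= -addrA lerDl.
apply: addr_ge0; apply: sumr_ge0 => l _; first exact: v_ge0.
by apply: sumr_ge0 => l' _; apply: v_ge0.
Qed.

End AbsoluteValue.

Section Blocks.
Variable ns : seq nat.

Lemma offS s : (s < size ns)%N -> off ns s.+1 = (off ns s + nth 0%N ns s)%N.
Proof. by move=> lts; rewrite /off (take_nth 0%N lts) sumn_rcons. Qed.

Lemma leq_off s t : (s <= t)%N -> (off ns s <= off ns t)%N.
Proof.
move=> /subnKC <-; elim: (t - s)%N => [|d IH]; first by rewrite addn0.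
apply: leq_trans IH _; rewrite addnS; have [lts|] := ltnP (s + d) (size ns).
  by rewrite offS // leq_addr.
by move=> les; rewrite /off !take_oversize // (leq_trans les).
Qed.

Lemma blk_off s i : (s < size ns)%N -> (off ns s <= i < off ns s + nth 0%N ns s)%N ->
  blk ns i = s.
Proof.
move=> lts /andP[si i_lt]; rewrite /blk -(subnKC (ltnW lts)) iotaD filter_cat size_cat.
rewrite !size_filter add0n (@eq_in_count _ _ predT) => [|t]; last first.
  by rewrite mem_iota add0n => /andP[_ ts]; apply: leq_trans (leq_off ts) si.
rewrite count_predT size_iota (@eq_in_count _ _ pred0) ?count_pred0 ?addn0 // => t.
rewrite mem_iota => /andP[st _] /=; apply/negbTE; rewrite -ltnNge.
by apply: leq_trans i_lt _; rewrite -offS // leq_off.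
Qed.

Definition Nindex (sc : nat * nat) := (sc.1 < size ns)%N && (sc.2 < nth 0%N ns sc.1)%N.

Definition Nbefore (w z : nat * nat) := (z.1 < w.1)%N || (z.1 == w.1) && (z.2 < w.2)%N.

Lemma Nlist_index : all Nindex (Nlist ns).
Proof.
apply/allP => _ /flatten_mapP[s + /mapP[c + ->]].
by rewrite !mem_rev !mem_iota /Nindex /= => ? ?; lia.
Qed.

Lemma Nlist_pairwise : pairwise Nbefore (Nlist ns).
Proof.
have gt_rev m : pairwise (fun a b => b < a)%N (rev (iota 0 m)).
  rewrite -sorted_pairwise; last by move=> x y z /= ? ?; lia.
  by rewrite rev_sorted; apply: iota_ltn_sorted.
rewrite /Nlist; move: (gt_rev (size ns)); elim: (rev _) => //= s S IH /andP[gtS /IH pwS].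
rewrite pairwise_cat pwS andbT; apply/andP; split.
  apply/allrelP => _ _ /mapP[c _ ->] /flatten_mapP[s' s'S /mapP[c' _ ->]].
  by rewrite /Nbefore /= (allP gtS _ s'S).
rewrite pairwise_map -sorted_pairwise; last by move=> ? ? ?; rewrite /Nbefore /=; lia.
rewrite rev_sorted; apply: sub_sorted (iota_ltn_sorted _ _) => x y /= xy.
by rewrite /Nbefore /= ltnn eqxx xy.
Qed.

Lemma Nbefore_bounds w z : Nindex w -> Nindex z -> Nbefore w z ->
  ((off ns z.1 + z.2 < off ns w.1 + w.2) &&
   ((off ns z.1 + z.2 < off ns w.1) || (off ns w.1 <= off ns z.1)))%N.
Proof.
case: w z => [s c] [s' c']; rewrite /Nindex /Nbefore /= => /andP[_ _] /andP[s'_lt c'_lt].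
case/orP => [s's | /andP[/eqP<- cc']]; last by rewrite ltn_add2l cc' leqnn orbT.
have lt_off : (off ns s' + c' < off ns s)%N.
  by apply: leq_trans (leq_off s's); rewrite offS // ltn_add2l.
by rewrite lt_off (leq_trans lt_off) ?leq_addr.
Qed.

End Blocks.

Section NGroups.
Variables (F : fieldType) (ns : seq nat) (s c : nat).
Local Notation n := (sumn ns).
Local Notation col_N := (@col_supp F n (off ns s) (off ns s + c)).

Lemma NgrpP (g : 'M[F]_n) : @Ngrp F ns s c g <-> exists2 A, col_N A & g = 1%:M + A.
Proof.
split=> [[g_diag g_off]|[A hA ->]].
  exists (g - 1%:M); last by rewrite addrC subrK.
  move=> i j; rewrite !mxE; have [->|ij] := eqVneq i j; first by rewrite g_diag subrr eqxx.
  by rewrite mulr0n subr0; apply: g_off.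
split=> [i|i j ij]; first by rewrite !mxE eqxx (col_supp_lower hA) ?addr0.
by rewrite !mxE (negbTE ij) add0r; apply: hA.
Qed.

Lemma col_supp_Mprime_Ugrp A : Nindex ns (s, c) -> col_N A ->
  @Mprime F ns (1%:M + A) /\ @Ugrp F ns (1%:M + A).
Proof.
case/andP => /= lts ltc hA.
have diag1 i : (1%:M + A) i i = 1 by rewrite !mxE eqxx (col_supp_lower hA) ?addr0.
have lower0 (i j : 'I_n) : (j < i)%N -> (1%:M + A) i j = 0.
  by move=> ji; rewrite !mxE (col_supp_lower hA (ltnW ji)) -val_eqE gtn_eqF ?addr0.
have bd : @blockdiag F ns (1%:M + A).
  move=> i j; apply: contraNeq; rewrite !mxE; have [->|ij] := eqVneq i j; first by rewrite eqxx.
  rewrite mulr0n add0r => /hA[jJ si ij'].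
  have jb : (off ns s <= j < off ns s + nth 0%N ns s)%N by rewrite jJ leq_addr ltn_add2l.
  have ib : (off ns s <= i < off ns s + nth 0%N ns s)%N.
    by rewrite si (ltn_trans ij') // jJ ltn_add2l.
  by rewrite (blk_off lts ib) (blk_off lts jb).
split; split=> //.
rewrite -det_tr det_trig => [|]; first by rewrite big1 // => i _; rewrite mxE diag1.
by apply/is_trig_mxP => i j ij; rewrite mxE lower0.
Qed.

End NGroups.


Section TwistedAverage.
Variables (F : fieldType) (n : nat) (k : fieldType) (E : lmodType k)
  (G U : 'M[F]_n -> Prop) (pi : 'M[F]_n -> E -> E) (theta : 'M[F]_n -> k) (a J : nat).
Hypotheses (pi_linear : forall g, linear (pi g))
  (theta_neq0 : forall g, U g -> theta g != 0)
  (col_supp_U : forall A, col_supp a J A -> U (1%:M + A)).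
HB.instance Definition _ g := GRing.isLinear.Build k E E *:%R (pi g) (pi_linear g).

Definition twist_avg (M : nat) (A : 'M[F]_n) (y : E) : E :=
  M%:R^-1 *: \sum_(0 <= j < M) (theta (unipow A j))^-1 *: pi (unipow A j) y.

Lemma U_unipow A j : col_supp a J A -> U (unipow A j).
Proof. by move=> hA; apply/col_supp_U/col_suppZ. Qed.

Lemma twist_avg_is_linear M A : linear (twist_avg M A).
Proof.
move=> x y z; rewrite /twist_avg scalerA [x * _]mulrC -scalerA -scalerDr; congr (_ *: _).
rewrite scaler_sumr -big_split; apply: eq_bigr => j _ /=.
by rewrite linearP scalerDr !scalerA mulrC.
Qed.
HB.instance Definition _ M A :=
  GRing.isLinear.Build k E E *:%R (twist_avg M A) (twist_avg_is_linear M A).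

Lemma twist_avg_stable (S : E -> Prop) M A y : lin_closed S -> col_supp a J A ->
  (forall B x, col_supp a J B -> S x -> S (pi (1%:M + B) x)) -> S y -> S (twist_avg M A y).
Proof.
move=> hS hA S_stable Sy; apply: lin_closedZ (hS) _; apply: (lin_closed_sum _ (hS)) => j.
by apply: lin_closedZ (hS) _; apply: S_stable Sy; apply: col_suppZ.
Qed.

Lemma twist_avg_sub (S : E -> Prop) M A y : lin_closed S -> col_supp a J A ->
  M%:R != 0 :> k ->
  (forall B, col_supp a J B -> S (pi (1%:M + B) y - theta (1%:M + B) *: y)) ->
  S (y - twist_avg M A y).
Proof.
move=> hS hA M_neq0 S_twist.
have y_avg : y = M%:R^-1 *: \sum_(0 <= j < M) y :> E.
  by rewrite sumr_const_nat subn0 -scaler_nat scalerA mulVf // scale1r.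
rewrite {1}y_avg /twist_avg -scalerBr -sumrB; apply: lin_closedZ (hS) _.
apply: (lin_closed_sum _ (hS)) => j; have th_neq0 := theta_neq0 (U_unipow j hA).
have -> : y - (theta (unipow A j))^-1 *: pi (unipow A j) y =
    - (theta (unipow A j))^-1 *: (pi (unipow A j) y - theta (unipow A j) *: y).
  by rewrite scalerBr scalerA mulNr mulVf // scaleNr scaleN1r opprK addrC.
by apply: lin_closedZ (hS) _; apply: S_twist; apply: col_suppZ.
Qed.

Section Representation.
Hypotheses (pi1 : forall x, pi 1%:M x = x)
  (piM : forall g h x, G g -> G h -> pi (g *m h) x = pi g (pi h x))
  (thetaM : forall g h, U g -> U h -> theta (g *m h) = theta g * theta h)
  (col_supp_G : forall A, col_supp a J A -> G (1%:M + A)).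

Lemma G_unipow A j : col_supp a J A -> G (unipow A j).
Proof. by move=> hA; apply/col_supp_G/col_suppZ. Qed.

Lemma pi_unipowS A j x : col_supp a J A ->
  pi (unipow A j.+1) x = pi (unipow A j) (pi (1%:M + A) x).
Proof.
by move=> hA; rewrite -(unipowS j hA) piM //; [apply: G_unipow | apply: col_supp_G].
Qed.

Lemma theta_unipowS A j : col_supp a J A ->
  theta (unipow A j.+1) = theta (unipow A j) * theta (1%:M + A).
Proof.
by move=> hA; rewrite -(unipowS j hA) thetaM //; [apply: U_unipow | apply: col_supp_U].
Qed.

Lemma theta1 : theta 1%:M = 1.
Proof.
have U1 : U 1%:M by rewrite -[1%:M]addr0; apply: col_supp_U; apply: col_supp0.
have th11 : theta 1%:M * theta 1%:M = theta 1%:M * 1 by rewrite -thetaM // mul1mx mulr1.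
by apply: mulfI th11; apply: theta_neq0.
Qed.

Lemma twist_avg_twist_eq0 M A b : col_supp a J A ->
  pi (unipow A M) b = b -> theta (unipow A M) = 1 ->
  twist_avg M A (pi (1%:M + A) b - theta (1%:M + A) *: b) = 0.
Proof.
move=> hA piM_b thM; pose D j := (theta (unipow A j))^-1 *: pi (unipow A j) b.
rewrite /twist_avg (eq_bigr (fun j => theta (1%:M + A) *: (D j.+1 - D j))) => [|j _].
  rewrite -scaler_sumr telescope_sumr // /D piM_b thM unipow0 pi1 theta1.
  by rewrite invr1 scale1r subrr !scaler0.
rewrite [pi _ (_ - _)]linearB /= [pi _ (_ *: b)]linearZ /= -pi_unipowS //.
have thA : theta (1%:M + A) != 0 by apply/theta_neq0/col_supp_U.
rewrite /D theta_unipowS // invfM scalerBr !scalerA.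
by rewrite scalerBr !scalerA mulrCA mulfV // mulr1 [theta _ * _]mulrC.
Qed.

Lemma twist_avg_comm M A B y : col_supp a J A -> col_supp a J B ->
  twist_avg M A (pi (1%:M + B) y) = pi (1%:M + B) (twist_avg M A y).
Proof.
move=> hA hB; rewrite /twist_avg [pi _ (_ *: _)]linearZ /= [in RHS]linear_sum /=.
congr (_ *: _); apply: eq_bigr => j _; rewrite [in RHS]linearZ /=.
by rewrite -!piM ?(unipow_comm _ hA hB) //; by [apply: col_supp_G | apply: G_unipow].
Qed.

Lemma twist_avg_twist M A B y : col_supp a J A -> col_supp a J B ->
  twist_avg M A (pi (1%:M + B) y - theta (1%:M + B) *: y) =
  pi (1%:M + B) (twist_avg M A y) - theta (1%:M + B) *: twist_avg M A y.
Proof.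
move=> hA hB; rewrite linearB /= [twist_avg _ _ (_ *: y)]linearZ /=.
by rewrite (twist_avg_comm _ _ hA hB).
Qed.

Lemma twist_avg_twist_sum (N : 'M[F]_n -> Prop) M A r y : col_supp a J A ->
  (forall g, N g -> exists2 B, col_supp a J B & g = 1%:M + B) ->
  twist_sum N pi theta r y -> twist_sum N pi theta r (twist_avg M A y).
Proof.
move=> hA N_col; elim: r y => [|r IH] y /=; first by move->; rewrite linear0.
case=> g [b [z [Ng hz ->]]]; have [B hB eg] := N_col g Ng.
exists g, (twist_avg M A b), (twist_avg M A z); split=> //; first exact: IH.
by rewrite linearD /= eg twist_avg_twist.
Qed.

End Representation.

End TwistedAverage.

Definition deriv_prefix (F : fieldType) (ns : seq nat) (k : fieldType) (E : lmodType k)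
    (pi : 'M[F]_(sumn ns) -> E -> E) (theta : 'M[F]_(sumn ns) -> k)
    (l : seq (nat * nat)) : E -> Prop :=
  foldl (deriv_step pi theta) (fun x => x = 0) l.

Lemma deriv_prefix_lin_closed (F : fieldType) (ns : seq nat) (k : fieldType)
    (E : lmodType k) (pi : 'M[F]_(sumn ns) -> E -> E) (theta : 'M[F]_(sumn ns) -> k) l :
  lin_closed (deriv_prefix pi theta l).
Proof.
case/lastP: l => [|l z]; first by split=> // a x y -> ->; rewrite scaler0 addr0.
by rewrite /deriv_prefix foldl_rcons; apply: gen_span_lin_closed.
Qed.

Section Transfer.
Variables (R : realType) (F : fieldType) (v : F -> R) (p : nat) (ns : seq nat)
  (k : fieldType) (E1 E2 : lmodType k)
  (tau : 'M[F]_(sumn ns) -> E1 -> E1) (rho : 'M[F]_(sumn ns) -> E2 -> E2)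
  (theta : 'M[F]_(sumn ns) -> k) (W : E1 -> Prop) (f : E1 -> E2).
Local Notation Mp := (@Mprime F ns).
Local Notation Ug := (@Ugrp F ns).
Hypotheses (v0 : v 0 = 0) (v_gt0 : forall x, x != 0 -> 0 < v x)
  (vM : forall x y, v (x * y) = v x * v y) (vp_lt1 : v p%:R < 1) (p_neq0 : p%:R != 0 :> k)
  (tau_linear : forall g, linear (tau g)) (tau1 : forall x, tau 1%:M x = x)
  (tauM : forall g h x, Mp g -> Mp h -> tau (g *m h) x = tau g (tau h x))
  (tau_smooth : forall x, exists2 eps : R, 0 < eps &
     forall g, Mp g -> near1 v eps g -> tau g x = x)
  (theta_neq0 : forall g, Ug g -> theta g != 0)
  (thetaM : forall g h, Ug g -> Ug h -> theta (g *m h) = theta g * theta h)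
  (theta_smooth : exists2 eps : R, 0 < eps & forall g, Ug g -> near1 v eps g -> theta g = 1)
  (W_closed : lin_closed W) (W_stable : forall g x, Mp g -> W x -> W (tau g x))
  (f_linear : linear f) (f_equiv : forall g x, Mp g -> W x -> f (tau g x) = rho g (f x)).
HB.instance Definition _ g := GRing.isLinear.Build k E1 E1 *:%R (tau g) (tau_linear g).
HB.instance Definition _ := GRing.isLinear.Build k E1 E2 *:%R f f_linear.

Section Step.
Variables (s c : nat).
Hypothesis sc_index : Nindex ns (s, c).
Local Notation col_N := (@col_supp F (sumn ns) (off ns s) (off ns s + c)).

Lemma col_N_Mprime A : col_N A -> Mp (1%:M + A).
Proof. by move=> hA; case: (col_supp_Mprime_Ugrp sc_index hA). Qed.

Lemma col_N_Ugrp A : col_N A -> Ug (1%:M + A).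
Proof. by move=> hA; case: (col_supp_Mprime_Ugrp sc_index hA). Qed.

Lemma exists_twist_period A b : col_N A ->
  exists M : nat, [/\ M%:R != 0 :> k, tau (unipow A M) b = b & theta (unipow A M) = 1].
Proof.
move=> hA; have [e1 e1_gt0 tau_b] := tau_smooth b; have [e2 e2_gt0 theta_e2] := theta_smooth.
have min_gt0 : 0 < Num.min e1 e2 by rewrite lt_min e1_gt0 e2_gt0.
have [N near_min] := near1_unipow_pexp v0 v_gt0 vM A vp_lt1 min_gt0.
have near_e e : Num.min e1 e2 <= e -> near1 v e (unipow A (p ^ N)).
  by move=> le_e i j; apply: lt_le_trans le_e; apply: near_min.
have hNA := col_suppZ (x := (p ^ N)%:R) hA.
exists (p ^ N)%N; split; first by rewrite natrX expf_neq0.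
  by apply: tau_b; [apply: col_N_Mprime | apply: near_e; rewrite ge_min lexx].
by apply: theta_e2; [apply: col_N_Ugrp | apply: near_e; rewrite ge_min lexx orbT].
Qed.

Lemma f_twist_avg M A y : col_N A -> W y ->
  f (twist_avg tau theta M A y) = twist_avg rho theta M A (f y).
Proof.
move=> hA Wy; rewrite /twist_avg linearZ /= linear_sum; congr (_ *: _).
apply: eq_bigr => j _; rewrite linearZ /= f_equiv //.
by apply: col_N_Mprime; apply: col_suppZ.
Qed.

Lemma deriv_step_transfer (Kt : E1 -> Prop) (Kr : E2 -> Prop) :
  lin_closed Kt -> (forall B x, col_N B -> Kt x -> Kt (tau (1%:M + B) x)) ->
  (forall x, W x -> Kt x -> Kr (f x)) ->
  forall x, W x -> deriv_step tau theta Kt (s, c) x -> deriv_step rho theta Kr (s, c) (f x).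
Proof.
move=> Kt_closed Kt_stable KtKr x Wx.
case/(gen_span_twist_sum tau_linear Kt_closed) => s0 Kt_s0 [r].
elim: r x s0 Wx Kt_s0 => [|r IH] x s0 Wx Kt_s0 /=.
  by move/subr0_eq => x_eq; apply: gs_base; left; apply: KtKr => //; rewrite x_eq.
case=> g [b [z [Ng hz x_s0]]]; have [A hA eg] := (NgrpP _ _ _).1 Ng.
have [M [M_neq0 tau_M theta_M]] := exists_twist_period b hA.
pose avg := twist_avg tau theta M A.
have -> : f x = f (avg x) + (f x - f (avg x)) by rewrite addrC subrK.
apply: lin_closedD (gen_span_lin_closed _) _ _.
  apply: (IH _ (avg s0)).
  - apply: (twist_avg_stable _ _ W_closed hA _ Wx) => B y hB; apply: W_stable.
    exact: col_N_Mprime.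
  - by apply: (twist_avg_stable _ _ Kt_closed hA _ Kt_s0) => B y hB; apply: Kt_stable.
  rewrite -linearB x_s0 linearD /= eg.
  rewrite (twist_avg_twist_eq0 tau_linear theta_neq0 col_N_Ugrp tau1 tauM thetaM col_N_Mprime
    hA tau_M theta_M) addr0.
  apply: (twist_avg_twist_sum tau_linear tauM col_N_Mprime M hA _ hz).
  by move=> g' /NgrpP.
rewrite f_twist_avg //.
apply: (twist_avg_sub theta_neq0 col_N_Ugrp (gen_span_lin_closed _) hA M_neq0).
move=> B hB; apply: gs_base; right; exists (1%:M + B), (f x); split=> //.
by apply/NgrpP; exists B.
Qed.

End Step.

Lemma deriv_prefix_stable l s c A : Nindex ns (s, c) ->
  col_supp (off ns s) (off ns s + c) A ->
  all (Nindex ns) l -> all (Nbefore ^~ (s, c)) l ->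
  forall x, deriv_prefix tau theta l x -> deriv_prefix tau theta l (tau (1%:M + A) x).
Proof.
move=> sc_index hA; elim/last_ind: l => [|l w IH]; first by move=> _ _ x /= ->; rewrite linear0.
rewrite !all_rcons => /andP[w_index l_index] /andP[w_before l_before].
rewrite /deriv_prefix !foldl_rcons; apply: gen_span_stable => y [Ky|[g [b [Ng ->]]]] /=.
  by apply: gs_base; left; apply: IH.
have [B hB ->] := (NgrpP _ _ _).1 Ng.
have /andP[lt_col le_row] := Nbefore_bounds w_index sc_index w_before.
have [C hC conj] := col_supp_conj hA hB lt_col le_row.
have [MA UA] := col_supp_Mprime_Ugrp sc_index hA.
have [MB UB] := col_supp_Mprime_Ugrp w_index hB.
have [MC UC] := col_supp_Mprime_Ugrp w_index hC.
have thC : theta (1%:M + C) = theta (1%:M + B).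
  by apply: (mulIf (theta_neq0 UA)); rewrite -thetaM // conj thetaM // mulrC.
apply: gs_base; right; exists (1%:M + C), (tau (1%:M + A) b).
split; first by apply/NgrpP; exists C.
by rewrite linearB linearZ /= -!tauM // conj thC.
Qed.

Lemma deriv_prefix_transfer l : all (Nindex ns) l -> pairwise Nbefore l ->
  forall x, W x -> deriv_prefix tau theta l x -> deriv_prefix rho theta l (f x).
Proof.
elim/last_ind: l => [|l [s c] IH]; first by move=> _ _ x _ /= ->; rewrite linear0.
rewrite all_rcons pairwise_rcons => /andP[sc_index l_index] /andP[l_before l_pairwise] x Wx.
rewrite /deriv_prefix !foldl_rcons; apply: deriv_step_transfer => //.
- exact: deriv_prefix_lin_closed.
- by move=> B y hB; apply: deriv_prefix_stable sc_index hB l_index l_before y.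
- exact: IH l_index l_pairwise.
Qed.

Lemma deriv_kernel_transfer x :
  W x -> deriv_kernel tau theta x -> deriv_kernel rho theta (f x).
Proof. exact: deriv_prefix_transfer (Nlist_index ns) (Nlist_pairwise ns) x. Qed.

End Transfer.

Theorem proposition4p13 (R : realType) (F : fieldType) (v : F -> R) (p : nat)
    (k : closedFieldType) (ns : seq nat) (E1 E2 : lmodType k)
    (tau : 'M[F]_(sumn ns) -> E1 -> E1) (rho : 'M[F]_(sumn ns) -> E2 -> E2)
    (theta : 'M[F]_(sumn ns) -> k) :
  nonarch_local_field v p ->
  (p%:R : k) != 0 ->
  all (fun x => (0 < x)%N) ns ->
  smooth_rep v (@Mprime F ns) tau ->
  smooth_rep v (@Mprime F ns) rho ->
  subquotient (@Mprime F ns) tau rho ->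
  nondeg_char v theta ->
  derivative_nonzero rho theta ->
  derivative_nonzero tau theta.
Proof.
move=> [v0 v_gt0 vM _ [_ vp_lt1]] p_neq0 _ [tau_linear tau1 tauM tau_smooth] _.
move=> [W [f [W0 W_lin W_stable [f_linear f_equiv] f_onto]]].
move=> [theta_neq0 thetaM [_ theta_smooth] _] [y y_notin].
have [x Wx fx] := f_onto y; exists x => x_in; apply: y_notin; rewrite -fx.
by apply: (deriv_kernel_transfer v0 v_gt0 vM vp_lt1 p_neq0 tau_linear tau1 tauM tau_smooth
  theta_neq0 thetaM theta_smooth (conj W0 W_lin) W_stable f_linear f_equiv Wx).
Qed.
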